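(* Let $P$ be a Markovian kernel on $(E,\mathcal{B})$, $S_n=\frac1n\sum_{k=0}^{n-1}P^k$, and $m$ a nonzero finite positive measure. Assume the generalized drift condition: there exist measurable $V,b:E\to[0,\infty)$ and $C\in\mathcal{B}$ with $PV\le V-1+b1_C$ on $E$; and Condition D: for every $r>0$ there exists $N_0>0$ with $\sup_{n\ge N_0}m(1_{[V\le r]}S_n(b^2))<\infty$. Then there exists $n_0>0$ with $\inf_{n\ge n_0}m(S_n1_C)>0$. *)

From HB Require Import structures.
From mathcomp Require Import all_boot all_order all_algebra.
From mathcomp Require Import all_classical all_reals all_analysis.
Set Implicit Arguments. Unset Strict Implicit. Unset Printing Implicit Defensive.
Import Order.TTheory GRing.Theory Num.Theory.
Local Open Scope classical_set_scope.
Local Open Scope ring_scope.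
Local Open Scope ereal_scope.

Fixpoint kiter d (T : measurableType d) (R : realType)
  (P : R.-pker T ~> T) (f : T -> \bar R) (k : nat) : T -> \bar R :=
  match k with
  | 0 => f
  | k.+1 => fun x => \int[P x]_y kiter P f k y
  end.

Definition Sn d (T : measurableType d) (R : realType)
  (P : R.-pker T ~> T) (n : nat) (f : T -> \bar R) : T -> \bar R :=
  fun x => ((n%:R)^-1)%:E * \sum_(k < n) kiter P f k x.

(* Iterating the drift inequality PV <= V - 1 + b 1_C gives
   P^n V + n <= V + \sum_(k < n) P^k (b 1_C), hence S_n (b 1_C) >= 1/2 on [V <= n/2].
   By Young's inequality b 1_C <= eps b^2 + 1_C / (4 eps), so on that set
   eps S_n (b^2) + S_n 1_C / (4 eps) >= 1/2 for every eps > 0.  Integrate this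
   against 1_A m, where A = [V <= r] has mass a > 0 (the sublevel sets exhaust E)
   and m (1_A S_n (b^2)) <= M for large n by Condition D; the choice
   eps = a / (4 M) leaves m (S_n 1_C) >= a^2 / (4 M). *)

From HB Require Import structures.
From mathcomp Require Import all_boot all_order all_algebra.
From mathcomp Require Import all_classical all_reals all_analysis.
From mathcomp Require Import measurable_realfun.
From mathcomp Require Import ring lra.
Set Implicit Arguments. Unset Strict Implicit. Unset Printing Implicit Defensive.
Import Order.TTheory GRing.Theory Num.Theory.
Local Open Scope classical_set_scope.
Local Open Scope ring_scope.
Local Open Scope ereal_scope.

Section kernel_iterates.
Context d (E : measurableType d) (R : realType) (P : R.-pker E ~> E).

Definition nonneg_mfun (f : E -> \bar R) :=
  (forall x, 0 <= f x) /\ measurable_fun [set: E] f.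

Lemma nonneg_mfun_EFin (f : E -> R) :
  (forall x, 0 <= f x)%R -> measurable_fun [set: E] f ->
  nonneg_mfun (fun x => (f x)%:E).
Proof. by move=> f0 mf; split=> [x|]; [rewrite lee_fin | exact/measurable_EFinP]. Qed.

Lemma nonneg_mfun_indic (A : set E) : measurable A ->
  nonneg_mfun (fun x => (\1_A x)%:E).
Proof.
move=> mA; apply: (nonneg_mfun_EFin (f := \1_A)); last exact: measurable_indic.
by move=> x; rewrite indicE ler0n.
Qed.

Lemma nonneg_mfunD f h : nonneg_mfun f -> nonneg_mfun h ->
  nonneg_mfun (fun x => f x + h x).
Proof.
by move=> [f0 mf] [h0 mh]; split=> [x|]; [exact: adde_ge0 | exact: emeasurable_funD].
Qed.

Lemma nonneg_mfunZ (c : R) f : (0 <= c)%R -> nonneg_mfun f ->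
  nonneg_mfun (fun x => c%:E * f x).
Proof.
move=> c0 [f0 mf]; split=> [x|]; last exact: measurable_funeM.
by apply: mule_ge0; rewrite ?lee_fin.
Qed.

Lemma ge0_integral_lincomb (m : {measure set E -> \bar R}) (c1 c2 : R) f h :
  (0 <= c1)%R -> (0 <= c2)%R -> nonneg_mfun f -> nonneg_mfun h ->
  \int[m]_y (c1%:E * f y + c2%:E * h y) =
  c1%:E * \int[m]_y f y + c2%:E * \int[m]_y h y.
Proof.
move=> c10 c20 [f0 mf] [h0 mh].
have [c1f0 mc1f] := nonneg_mfunZ c10 (conj f0 mf).
have [c2h0 mc2h] := nonneg_mfunZ c20 (conj h0 mh).
by rewrite ge0_integralD // !ge0_integralZl ?lee_fin.
Qed.

Lemma nonneg_mfun_kiter f k : nonneg_mfun f -> nonneg_mfun (kiter P f k).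
Proof.
move=> [f0 mf]; elim: k => [|k [IH0 IHm]] //=; split.
- by move=> x; apply: integral_ge0 => y _; exact: IH0.
- apply: measurable_fun_integral_kernel => // U mU; exact: measurable_kernel.
Qed.

Lemma kiterD f h k x : nonneg_mfun f -> nonneg_mfun h ->
  kiter P (fun y => f y + h y) k x = kiter P f k x + kiter P h k x.
Proof.
move=> Nf Nh; elim: k x => [|k IH] x //=.
under eq_integral do rewrite IH.
have [f0 mf] := nonneg_mfun_kiter k Nf; have [h0 mh] := nonneg_mfun_kiter k Nh.
by rewrite ge0_integralD.
Qed.

Lemma kiterZ (c : R) f k x : (0 <= c)%R -> nonneg_mfun f ->
  kiter P (fun y => c%:E * f y) k x = c%:E * kiter P f k x.
Proof.
move=> c0 Nf; elim: k x => [|k IH] x //=.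
under eq_integral do rewrite IH.
have [f0 mf] := nonneg_mfun_kiter k Nf.
by rewrite ge0_integralZl // lee_fin.
Qed.

Lemma le_kiter f h k x : nonneg_mfun f -> nonneg_mfun h ->
  (forall y, f y <= h y) -> kiter P f k x <= kiter P h k x.
Proof.
move=> Nf Nh fh; elim: k x => [|k IH] x //=.
have [f0 mf] := nonneg_mfun_kiter k Nf; have [h0 mh] := nonneg_mfun_kiter k Nh.
by apply: ge0_le_integral => // y _; exact: IH.
Qed.

Lemma nonneg_mfun_Sn n f : nonneg_mfun f -> nonneg_mfun (Sn P n f).
Proof.
move=> Nf; split=> [x|].
- apply: mule_ge0; first by rewrite lee_fin invr_ge0.
  by apply: sume_ge0 => k _; exact: (nonneg_mfun_kiter k Nf).1.
- apply: measurable_funeM; apply: emeasurable_sum => k.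
  exact: (nonneg_mfun_kiter k Nf).2.
Qed.

Lemma SnD n f h x : nonneg_mfun f -> nonneg_mfun h ->
  Sn P n (fun y => f y + h y) x = Sn P n f x + Sn P n h x.
Proof.
move=> Nf Nh; rewrite /Sn (eq_bigr _ (fun (k : 'I_n) _ => kiterD k x Nf Nh)) big_split.
rewrite ge0_muleDr //; apply: sume_ge0 => k _.
- exact: (nonneg_mfun_kiter k Nf).1.
- exact: (nonneg_mfun_kiter k Nh).1.
Qed.

Lemma SnZ (c : R) n f x : (0 <= c)%R -> nonneg_mfun f ->
  Sn P n (fun y => c%:E * f y) x = c%:E * Sn P n f x.
Proof.
move=> c0 Nf; rewrite /Sn (eq_bigr _ (fun (k : 'I_n) _ => kiterZ k x c0 Nf)).
rewrite -ge0_sume_distrr; first by rewrite muleCA.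
by move=> k _; exact: (nonneg_mfun_kiter k Nf).1.
Qed.

Lemma le_Sn n f h x : nonneg_mfun f -> nonneg_mfun h ->
  (forall y, f y <= h y) -> Sn P n f x <= Sn P n h x.
Proof.
move=> Nf Nh fh; apply: lee_wpmul2l; first by rewrite lee_fin invr_ge0.
by apply: lee_sum => k _; exact: le_kiter.
Qed.

Lemma integral_kernel_cst x (c : R) : \int[P x]_y c%:E = c%:E.
Proof. by rewrite (integral_cst (P x) measurableT) prob_kernel mule1. Qed.

Lemma kiter_drift_sum (W g : E -> \bar R) :
  nonneg_mfun W -> nonneg_mfun g ->
  (forall x, \int[P x]_y W y + 1 <= W x + g x) ->
  forall n x, kiter P W n x + n%:R%:E <= W x + \sum_(k < n) kiter P g k x.
Proof.
move=> [W0 mW] Ng drift; elim=> [|n IH] x; first by rewrite big_ord0 /= !adde0.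
have [Wn0 mWn] := nonneg_mfun_kiter n (conj W0 mW).
have sum_ge0 y : 0 <= \sum_(k < n) kiter P g k y.
  by apply: sume_ge0 => k _; exact: (nonneg_mfun_kiter k Ng).1.
have msum : measurable_fun [set: E] (fun y => \sum_(k < n) kiter P g k y).
  by apply: emeasurable_sum => k; exact: (nonneg_mfun_kiter k Ng).2.
have integrated_IH : \int[P x]_y kiter P W n y + n%:R%:E <=
    \int[P x]_y W y + \sum_(k < n) kiter P g k.+1 x.
  rewrite -[X in _ + X <= _](integral_kernel_cst x) -ge0_integralD //.
  rewrite -ge0_integral_sum //; last 2 first.
  - by move=> k; exact: (nonneg_mfun_kiter k Ng).2.
  - by move=> k y _; exact: (nonneg_mfun_kiter k Ng).1.
  rewrite -ge0_integralD //; apply: ge0_le_integral => //.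
  - by move=> y _; apply: adde_ge0 => //; rewrite lee_fin.
  - exact: emeasurable_funD.
  - exact: (emeasurable_funD mW msum).
rewrite big_ord_recl /= -natr1 EFinD addeA.
apply: le_trans (leeD integrated_IH (lexx 1)) _.
by rewrite addeAC addeA leeD2r // drift.
Qed.

Lemma Sn_drift_ge_half (W g : E -> \bar R) n x :
  nonneg_mfun W -> nonneg_mfun g ->
  (forall x, \int[P x]_y W y + 1 <= W x + g x) ->
  (0 < n)%N -> W x <= (n%:R / 2)%:E -> (1 / 2)%:E <= Sn P n g x.
Proof.
move=> NW Ng drift n0 Wx.
set T := \sum_(k < n) kiter P g k x.
have Wx_fin : W x \is a fin_num.
  by rewrite ge0_fin_numE ?NW.1 // (le_lt_trans Wx (ltry _)).
have half_le_sum : (n%:R / 2)%:E <= T.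
  have : n%:R%:E <= W x + T.
    apply: le_trans (kiter_drift_sum NW Ng drift n x).
    by rewrite leeDr //; exact: (nonneg_mfun_kiter n NW).1.
  rewrite -(fineK Wx_fin) -leeBlDl // -EFinB => /(le_trans _); apply.
  move: Wx; rewrite -(fineK Wx_fin) !lee_fin; lra.
apply: le_trans (lee_wpmul2l _ half_le_sum); last by rewrite lee_fin invr_ge0.
by rewrite -EFinM lee_fin mulrA mulVf ?mul1r // pnatr_eq0 -lt0n.
Qed.
End kernel_iterates.

Lemma mul_le_young (R : realFieldType) (eps x t : R) : (0 < eps)%R ->
  (x * t <= eps * x ^+ 2 + t ^+ 2 / (4 * eps))%R.
Proof.
move=> eps0; rewrite -subr_ge0.
have -> : (eps * x ^+ 2 + t ^+ 2 / (4 * eps) - x * t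
          = (2 * eps * x - t) ^+ 2 / (4 * eps))%R.
  by field; rewrite gt_eqF.
by rewrite divr_ge0 ?sqr_ge0 // mulr_ge0 // ltW.
Qed.

Lemma exists_sublevel_pos_measure d (E : measurableType d) (R : realType)
    (m : {measure set E -> \bar R}) (V : E -> R) :
  measurable_fun [set: E] V -> 0 < m [set: E] ->
  exists k : nat, 0 < m [set y | (V y <= k.+1%:R)%R].
Proof.
move=> mV mT; apply/not_existsP => null_sublevels.
have sublevel0 k : m [set y | (V y <= k.+1%:R)%R] = 0.
  by apply/eqP; rewrite eq_le measure_ge0 andbT leNgt; apply/negP.
have : m [set: E] <= \sum_(0 <= k <oo) m [set y | (V y <= k.+1%:R)%R].
  apply: measure_sigma_subadditive => //.
  - by move=> k; rewrite -[X in measurable X]setTI; exact: measurable_fun_le.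
  - move=> y _; exists (Num.Def.archi_bound `|V y|) => //=.
    apply: le_trans (ler_norm _) _; apply/ltW.
    by apply: lt_le_trans (archi_boundP (normr_ge0 _)) _; rewrite ler_nat.
by rewrite eseries0 ?leNgt ?mT // => k _ _; exact: sublevel0.
Qed.

Lemma ereal_sup_ltey_bounded (R : realType) (S : set (\bar R)) :
  ereal_sup S < +oo -> exists2 M : R, (0 < M)%R & forall x, S x -> x <= M%:E.
Proof.
move=> supS; exists (`|fine (ereal_sup S)| + 1)%R => [|x Sx].
  by rewrite ltr_pwDr ?normr_ge0.
apply: le_trans (ereal_sup_ubound Sx) _.
move: supS; case: (ereal_sup S) => [r _| //|_] /=; last exact: leNye.
by rewrite lee_fin (le_trans (ler_norm r)) // lerDl.
Qed.

Lemma tradeoff_integral_ge d (E : measurableType d) (R : realType)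
    (m : {measure set E -> \bar R}) (A : set E) (f h : E -> \bar R) (a M : R) :
  measurable A -> m A = a%:E -> (0 < a)%R -> (0 < M)%R ->
  nonneg_mfun f -> nonneg_mfun h ->
  \int[m]_y ((\1_A y)%:E * f y) <= M%:E ->
  (forall eps : R, (0 < eps)%R -> forall y, A y ->
     (1 / 2)%:E <= eps%:E * f y + ((4 * eps)^-1)%:E * h y) ->
  (a ^+ 2 / (4 * M))%:E <= \int[m]_y h y.
Proof.
move=> mA mAa a0 M0 Nf Nh intAf tradeoff.
(* With this [eps], [eps * M = a / 4] and the bound reads [a / 4 <= c * \int h]. *)
pose eps := (a / (4 * M))%R; pose c := ((4 * eps)^-1)%R.
have eps0 : (0 < eps)%R by rewrite divr_gt0 // mulr_gt0.
have c0 : (0 < c)%R by rewrite invr_gt0 mulr_gt0.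
have NA : nonneg_mfun (fun y => (\1_A y)%:E : \bar R) by exact: nonneg_mfun_indic.
have NAf : nonneg_mfun (fun y => (\1_A y)%:E * f y).
  by split=> [y|]; [apply: mule_ge0; [exact: NA.1 | exact: Nf.1]
                   | exact: emeasurable_funM NA.2 Nf.2].
have NeAf := nonneg_mfunZ (ltW eps0) NAf; have Nch := nonneg_mfunZ (ltW c0) Nh.
have pointwise y : (1 / 2)%:E * (\1_A y)%:E <=
    eps%:E * ((\1_A y)%:E * f y) + c%:E * h y.
  rewrite indicE; have [yA|yA] := boolP (y \in A) => /=.
  - by rewrite !mule1 mul1e; apply: tradeoff eps0 _ _; rewrite inE in yA.
  - by rewrite !mule0 mul0e mule0 add0e; exact: Nch.1.
have integrated : \int[m]_y ((1 / 2)%:E * (\1_A y)%:E) <=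
    \int[m]_y (eps%:E * ((\1_A y)%:E * f y) + c%:E * h y).
  apply: ge0_le_integral => //.
  - exact: measurable_funeM NA.2.
  - exact: emeasurable_funD NeAf.2 Nch.2.
rewrite ge0_integralZl ?integral_indic ?setIT ?mAa //= in integrated;
  last exact: NA.2.
rewrite ge0_integral_lincomb ?(ltW eps0) ?(ltW c0) // in integrated.
have bound : (1 / 2)%:E * a%:E <= (eps * M)%:E + c%:E * \int[m]_y h y.
  apply: le_trans integrated _; rewrite leeD2r // (EFinM eps M).
  by apply: lee_wpmul2l; rewrite // lee_fin ltW.
have : 0 <= \int[m]_y h y by apply: integral_ge0 => y _; exact: Nh.1.
move: bound; case: (\int[m]_y h y) => [j | _ _ | //] /=; last exact: leey.
rewrite -!EFinM -EFinD !lee_fin => bound j0.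
have epsM : (eps * M = a / 4)%R by rewrite /eps; field; rewrite gt_eqF.
have cbound : (c * (a ^+ 2 / (4 * M)) = a / 4)%R.
  by rewrite /c /eps; field; rewrite !gt_eqF.
by rewrite -(ler_pM2l c0) cbound; lra.
Qed.

Lemma Sn_young_ge_half d (E : measurableType d) (R : realType)
    (P : R.-pker E ~> E) (V b : E -> R) (C : set E) (eps : R) n x :
  measurable_fun [set: E] V -> measurable_fun [set: E] b ->
  (forall x, 0 <= V x)%R -> (forall x, 0 <= b x)%R -> measurable C ->
  (forall x, \int[P x]_y (V y)%:E <= (V x)%:E - 1 + (b x)%:E * (\1_C x)%:E) ->
  (0 < eps)%R -> (0 < n)%N -> (V x <= n%:R / 2)%R ->
  (1 / 2)%:E <= eps%:E * Sn P n (fun y => (b y ^+ 2)%:E) x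
                + ((4 * eps)^-1)%:E * Sn P n (fun y => (\1_C y)%:E) x.
Proof.
move=> mV mb V0 b0 mC drift eps0 n0 Vx.
have bC0 y : (0 <= b y * \1_C y)%R by rewrite mulr_ge0 // indicE ler0n.
have NV := nonneg_mfun_EFin V0 mV.
have NbC := nonneg_mfun_EFin bC0 (measurable_funM mb (measurable_indic mC)).
have Nb2 := nonneg_mfun_EFin (fun y => sqr_ge0 (b y)) (measurable_funX 2 mb).
have NC : nonneg_mfun (fun y => (\1_C y)%:E : \bar R) by exact: nonneg_mfun_indic.
have drift1 y : \int[P y]_z (V z)%:E + 1 <= (V y)%:E + (b y * \1_C y)%:E.
  apply: le_trans (leeD (drift y) (lexx 1)) _.
  by rewrite -EFinM -EFinB -!EFinD lee_fin; lra.
have young y : (b y * \1_C y)%:E <=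
    eps%:E * (b y ^+ 2)%:E + ((4 * eps)^-1)%:E * (\1_C y)%:E.
  rewrite -!EFinM -EFinD lee_fin.
  have indic2 : (\1_C y ^+ 2 = \1_C y :> R)%R.
    by rewrite indicE; case: (y \in C); rewrite /= ?expr1n ?expr0n.
  rewrite -[X in (_ <= _ + _ * X)%R]indic2 [X in (_ <= _ + X)%R]mulrC.
  exact: mul_le_young.
have Nepsb2 := nonneg_mfunZ (ltW eps0) Nb2.
have c0 : (0 <= (4 * eps)^-1)%R by rewrite invr_ge0 mulr_ge0 // ltW.
have NcC := nonneg_mfunZ c0 NC.
rewrite -SnZ ?(ltW eps0) // -SnZ // -SnD //.
have Vx' : (V x)%:E <= (n%:R / 2)%:E by rewrite lee_fin.
apply: le_trans (Sn_drift_ge_half NV NbC drift1 n0 Vx') _.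
exact: le_Sn NbC (nonneg_mfunD Nepsb2 NcC) young.
Qed.

Theorem proposition3p10 (d : measure_display) (E : measurableType d)
  (R : realType) (P : R.-pker E ~> E)
  (m : {finite_measure set E -> \bar R}) (hm : 0 < m setT)
  (V b : E -> R) (C : set E)
  (mV : measurable_fun setT V) (mb : measurable_fun setT b)
  (V0 : forall x, (0 <= V x)%R) (b0 : forall x, (0 <= b x)%R)
  (mC : measurable C)
  (drift : forall x, \int[P x]_y (V y)%:E
                      <= (V x)%:E - 1 + (b x)%:E * (\1_C x)%:E)
  (condD : forall r : R, (0 < r)%R -> exists N0 : nat, (0 < N0)%N /\
     ereal_sup [set \int[m]_x ((\1_[set y | (V y <= r)%R] x)%:E
                    * Sn P n (fun y => ((b y) ^+ 2)%:E) x)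
               | n in [set n : nat | (N0 <= n)%N]] < +oo) :
  exists n0 : nat, (0 < n0)%N /\
    0 < ereal_inf [set \int[m]_x Sn P n (fun y => (\1_C y)%:E) x
                  | n in [set n : nat | (n0 <= n)%N]].
Proof.
have [k mA_gt0] := exists_sublevel_pos_measure mV hm.
set A := [set y | (V y <= k.+1%:R)%R] in mA_gt0.
have mA : measurable A by rewrite -[A]setTI; exact: measurable_fun_le.
have [N0 [_ supD]] := condD _ (ltr0Sn R k).
have [M M0 boundD] := ereal_sup_ltey_bounded supD.
pose a := fine (m A).
have mAa : m A = a%:E by rewrite fineK ?fin_num_measure.
have a0 : (0 < a)%R by rewrite -lte_fin -mAa.
exists (maxn N0 (2 * k.+1)); split; first by rewrite leq_max muln_gt0 orbT.
apply: (@lt_le_trans _ _ (a ^+ 2 / (4 * M))%:E).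
  by rewrite lte_fin divr_gt0 ?mulr_gt0 ?exprn_gt0.
apply: le_ereal_inf_tmp => _ [n /= /[!geq_max] /andP[N0n kn] <-].
have n0 : (0 < n)%N by apply: leq_trans kn; rewrite muln_gt0.
apply: (tradeoff_integral_ge mA mAa a0 M0).
- exact/nonneg_mfun_Sn/(nonneg_mfun_EFin (fun y => sqr_ge0 (b y)))/measurable_funX.
- by apply: nonneg_mfun_Sn; exact: nonneg_mfun_indic.
- by apply: boundD; exists n.
- move=> eps eps0 y Ay; apply: Sn_young_ge_half => //; first exact: mV.
  apply: le_trans Ay _.
  have : ((2 * k.+1)%:R <= n%:R :> R)%R by rewrite ler_nat.
  rewrite natrM; lra.
Qed.
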